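(* For every $n\ge 1$, $M^{\Box}_n = K^{\Box}_n = P^{\Box}_n$; in fact, a water/land coloring of the $1\times n$ fundamental domain satisfies (N1) and (N2$\Box$) on the Möbius strip iff it does so on the Klein bottle iff it does so on the projective plane.
   Context: Colorings. Each square is colored water or land. Two distinct squares are adjacent if they share an edge after all edge identifications; a set of squares is connected if its induced adjacency graph is connected (empty set counts as connected). (N1): the water is connected. For an interior (non-boundary) vertex $v$, its square-degree is the number of distinct squares having $v$ as a corner. (N2$\Box$): no interior vertex of square-degree $4$ has all incident squares water. Tile $[0,n]\times[0,1]$ by unit squares $[j-1,j]\times[0,1]$, called square $j$. The $1\times n$ Möbius strip identifies $(x,1)\sim(n-x,0)$ for $x\in[0,n]$; its boundary is the image of the vertical sides. The $1\times n$ Klein bottle additionally identifies $(0,y)\sim(n,y)$; the $1\times n$ projective plane additionally identifies $(0,y)\sim(n,1-y)$. $M^\Box_n$, $K^\Box_n$, $P^\Box_n$ are the numbers of colorings satisfying (N1) and (N2$\Box$) on the Möbius strip, Klein bottle, projective plane respectively. *)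

From mathcomp Require Import all_boot.
Set Implicit Arguments. Unset Strict Implicit. Unset Printing Implicit Defensive.

Inductive surf := Mob | Klein | Proj.

Section Surface.
Variable n : nat.

(* Squares: square j (1 <= j <= n) = [j-1,j] x [0,1] is indexed by i : 'I_n
   with i = j - 1.  A coloring assigns true = water, false = land. *)
Definition coloring := {ffun 'I_n -> bool}.

(* Grid points (k, y) with k in {0..n}, y in {0,1} (false = 0, true = 1). *)
Definition gpt := ('I_n.+1 * bool)%type.

(* Primitive identifications of grid points:
   Mobius:      (x,1) ~ (n-x,0);
   Klein:       additionally (0,y) ~ (n,y);
   projective:  additionally (0,y) ~ (n,1-y). *)
Definition glue_pt (S : surf) (p q : gpt) : bool :=
  [&& p.2, ~~ q.2 & (p.1 + q.1 == n)%N]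
  || match S with
     | Mob => false
     | Klein => [&& (p.1 == 0 :> nat), (q.1 == n :> nat) & (p.2 == q.2)]
     | Proj => [&& (p.1 == 0 :> nat), (q.1 == n :> nat) & (p.2 != q.2)]
     end.

Definition same_vertex (S : surf) (p q : gpt) : bool :=
  connect (fun a b => glue_pt S a b || glue_pt S b a) p q.

(* Grid edges: inl (i, y) = horizontal segment [i,i+1] x {y} (i < n);
   inr k = vertical segment {k} x [0,1] (k <= n). *)
Definition gedge := (('I_n * bool) + 'I_n.+1)%type.

(* Primitive identifications of edges:
   Mobius: top segment [i,i+1]x{1} ~ bottom segment [n-i-1,n-i]x{0};
   Klein / projective: additionally vertical side x=0 ~ vertical side x=n. *)
Definition glue_edge (S : surf) (e f : gedge) : bool :=
  match e, f with
  | inl (i, true), inl (j, false) => (i + j + 1 == n)%N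
  | inr k, inr l =>
      match S with
      | Mob => false
      | _ => (k == 0 :> nat) && (l == n :> nat)
      end
  | _, _ => false
  end.

Definition same_edge (S : surf) (e f : gedge) : bool :=
  connect (fun a b => glue_edge S a b || glue_edge S b a) e f.

Definition sq_edge (i : 'I_n) (e : gedge) : bool :=
  match e with
  | inl (j, _) => j == i
  | inr k => (k == i :> nat) || (k == i.+1 :> nat)
  end.

Definition sq_corner (i : 'I_n) (p : gpt) : bool :=
  (p.1 == i :> nat) || (p.1 == i.+1 :> nat).

Definition adj (S : surf) (a b : 'I_n) : bool :=
  (a != b) &&
  [exists e, exists f, [&& sq_edge a e, sq_edge b f & same_edge S e f]].

Definition bdry_pt (S : surf) (p : gpt) : bool :=
  match S with
  | Mob => (p.1 == 0 :> nat) || (p.1 == n :> nat)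
  | _ => false
  end.

Definition interior (S : surf) (p : gpt) : bool :=
  ~~ [exists q, same_vertex S p q && bdry_pt S q].

Definition incident (S : surf) (p : gpt) (i : 'I_n) : bool :=
  [exists q, sq_corner i q && same_vertex S p q].

Definition sq_degree (S : surf) (p : gpt) : nat :=
  #|[set i | incident S p i]|.

Definition N1 (S : surf) (c : coloring) : bool :=
  [forall a, forall b, (c a && c b) ==>
     connect (fun x y => [&& c x, c y & adj S x y]) a b].

Definition N2box (S : surf) (c : coloring) : bool :=
  [forall p, (interior S p && (sq_degree S p == 4%N)) ==>
     ~~ [forall i, incident S p i ==> c i]].

Definition good (S : surf) (c : coloring) : bool := N1 S c && N2box S c.

Definition count_good (S : surf) : nat := #|[set c : coloring | good S c]|.

End Surface.

Definition Mbox (n : nat) := count_good n Mob.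
Definition Kbox (n : nat) := count_good n Klein.
Definition Pbox (n : nat) := count_good n Proj.

From mathcomp Require Import all_boot zify.
Set Implicit Arguments. Unset Strict Implicit.

(* The Klein bottle and the projective plane are obtained from the Moebius
   strip by gluing the two vertical sides.  On edges this only makes the end
   squares 1 and n adjacent, and they already are on the Moebius strip, whose
   twisted gluing puts the top of square 1 against the bottom of square n; so
   the adjacency graph, hence (N1), is the same on all three surfaces.  On
   vertices the side gluing only merges grid points lying on the vertical
   sides; these are corners of squares 1 and n only, so they have
   square-degree at most 2 and never matter for (N2), while every other grid
   point has the same vertex class on all three surfaces. *)

Lemma connect_sym_invariant (T : finType) (r : rel T) (P : pred T) x y :
  (forall u v, r u v -> P u = P v) ->
  connect (fun u v => r u v || r v u) x y -> P x = P y.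
Proof.
move=> rP; apply: (closed_connect (a := P)).
by move=> u v /orP[/rP | /rP /esym].
Qed.

Section Surfaces.
Variable n : nat.

Definition on_side (p : gpt n) : bool := (p.1 == 0 :> nat) || (p.1 == n :> nat).

Lemma glue_pt_side S (p q : gpt n) : glue_pt S p q -> on_side p = on_side q.
Proof.
case: p q => [[p1 hp] p2] [[q1 hq] q2]; rewrite /glue_pt /on_side.
by case: S; case: p2; case: q2 => /=; lia.
Qed.

Definition twin_class (k : nat) (b : bool) (q : gpt n) : bool :=
  (q.1 == k :> nat) && (q.2 == b) || (q.1 == n - k :> nat) && (q.2 == ~~ b).

Lemma glue_pt_twin S k b (p q : gpt n) : 0 < k < n -> glue_pt S p q ->
  twin_class k b p = twin_class k b q.
Proof.
case: p q => [[p1 hp] p2] [[q1 hq] q2]; rewrite /glue_pt /twin_class /=.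
by case: S; case: p2; case: q2; case: b => /=; lia.
Qed.

Lemma same_vertex_inner S (p q : gpt n) : 0 < p.1 < n ->
  same_vertex S p q = twin_class p.1 p.2 q.
Proof.
move=> p_inner; apply/idP/idP => [pq | ].
  rewrite -(connect_sym_invariant (P := twin_class p.1 p.2) _ pq); last first.
    by move=> u v; apply: glue_pt_twin.
  by rewrite /twin_class !eqxx.
case: p q p_inner => [[p1 hp] p2] [[q1 hq] q2] /= p_inner.
rewrite /twin_class /= => /orP[] /andP[/eqP q1E /eqP ->].
  by apply: eq_connect0; congr pair; apply: val_inj.
apply: connect1; rewrite /glue_pt /= q1E.
have [-> ->] : (p1 + (n - p1) == n) /\ (n - p1 + p1 == n) by split; apply/eqP; lia.
by case: p2; rewrite /= ?orbT.
Qed.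

(* No edge is glued to two others, so [same_edge] never needs more than one step. *)
Definition edge_step S (e f : gedge n) : bool :=
  [|| e == f, glue_edge S e f | glue_edge S f e].

Lemma glue_edge_step S (e u v : gedge n) : glue_edge S u v ->
  edge_step S e u = edge_step S e v.
Proof.
rewrite /edge_step -!sum_eqE.
case: e => [[[i hi] b]|[k hk]]; case: u => [[[j hj] c]|[l hl]];
  case: v => [[[m hm] d]|[p hp]]; case: S => /=; try case: b; try case: c;
  try case: d; rewrite /= ?xpair_eqE -?val_eqE /=; lia.
Qed.

Lemma same_edgeE S (e f : gedge n) : same_edge S e f = edge_step S e f.
Proof.
apply/idP/idP => [ef | /or3P[/eqP<- | ef | fe]].
- have := connect_sym_invariant (P := edge_step S e) (@glue_edge_step S e) ef.
  by rewrite /edge_step eqxx => <-.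
- exact: connect0.
- by apply: connect1; rewrite ef.
- by apply: connect1; rewrite fe orbT.
Qed.

Lemma edge_step_sym S (e f : gedge n) : edge_step S e f = edge_step S f e.
Proof. by rewrite /edge_step eq_sym; congr (_ || _); apply: orbC. Qed.

Lemma edge_step_twisted S (i j : 'I_n) : i + j + 1 = n ->
  edge_step S (inl (i, true)) (inl (j, false)).
Proof. by move=> ijn; rewrite /edge_step /= ijn eqxx orbT. Qed.

Lemma edge_step_Mob S (e f : gedge n) : edge_step Mob e f -> edge_step S e f.
Proof.
rewrite /edge_step -!sum_eqE.
case: e => [[[i hi] b]|[k hk]]; case: f => [[[j hj] c]|[l hl]]; case: S => /=;
  try case: b; try case: c; rewrite /= ?xpair_eqE -?val_eqE /=; lia.
Qed.

Lemma edge_step_squares S (a b : 'I_n) (e f : gedge n) :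
  edge_step S e f -> sq_edge a e -> sq_edge b f ->
  [|| edge_step Mob e f, (a == 0 :> nat) && (b == n.-1 :> nat)
    | (b == 0 :> nat) && (a == n.-1 :> nat)].
Proof.
rewrite /edge_step -!sum_eqE; case: a b => [a ha] [b hb].
case: e => [[[i hi] c]|[k hk]]; case: f => [[[j hj] d]|[l hl]]; case: S => /=;
  try case: c; try case: d; rewrite /= ?xpair_eqE -?val_eqE /=; lia.
Qed.

Lemma adj_Mob S (a b : 'I_n) : adj S a b = adj Mob a b.
Proof.
rewrite /adj; congr (_ && _); apply/existsP/existsP => -[e /existsP[f /and3P[ae bf]]];
  rewrite same_edgeE => ef.
- case/or3P: (edge_step_squares ef ae bf) => [mob | /andP[a0 b_last] | /andP[b0 a_last]].
  + by exists e; apply/existsP; exists f; rewrite ae bf same_edgeE.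
  + exists (inl (a, true)); apply/existsP; exists (inl (b, false)).
    rewrite /= !eqxx same_edgeE edge_step_twisted //.
    by move: (ltn_ord a) (ltn_ord b); lia.
  + exists (inl (a, false)); apply/existsP; exists (inl (b, true)).
    rewrite /= !eqxx same_edgeE edge_step_sym edge_step_twisted //.
    by move: (ltn_ord a) (ltn_ord b); lia.
- by exists e; apply/existsP; exists f; rewrite ae bf same_edgeE edge_step_Mob.
Qed.

Lemma interior_inner S (p : gpt n) : 0 < p.1 < n -> interior S p.
Proof.
move=> p_inner; apply/existsP => -[q /andP[]].
rewrite same_vertex_inner // /twin_class; case: S => //=.
by case: p q p_inner => [[p1 ?] p2] [[q1 ?] q2] /=; lia.
Qed.

Lemma incident_inner S (p : gpt n) (i : 'I_n) : 0 < p.1 < n ->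
  incident S p i = incident Mob p i.
Proof.
by move=> p_inner; apply: eq_existsb => q; rewrite !same_vertex_inner.
Qed.

Lemma incident_side S (p : gpt n) (i : 'I_n) : on_side p -> incident S p i ->
  val i \in [:: 0; n.-1].
Proof.
move=> p_side /existsP[q /andP[corner pq]].
have q_side : on_side q.
  by rewrite -(connect_sym_invariant (P := on_side) _ pq) // => u v; apply: glue_pt_side.
move: corner q_side; rewrite /sq_corner /on_side !inE.
by case: q {pq} => [[q1 ?] ?] /=; move: (ltn_ord i); lia.
Qed.

Lemma sq_degree_side S (p : gpt n) : on_side p -> sq_degree S p <= 2.
Proof.
move=> p_side; rewrite /sq_degree cardE -(size_map val).
apply: (@uniq_leq_size _ _ [:: 0; n.-1]).
  by rewrite (map_inj_uniq val_inj) enum_uniq.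
by move=> x /mapP[i]; rewrite mem_enum inE => /(incident_side p_side) + ->.
Qed.
Lemma N1_Mob S (c : coloring n) : N1 S c = N1 Mob c.
Proof.
apply: eq_forallb => a; apply: eq_forallb => b; congr (_ ==> _).
by apply: eq_connect => x y; rewrite adj_Mob.
Qed.

Lemma N2box_Mob S (c : coloring n) : N2box S c = N2box Mob c.
Proof.
apply: eq_forallb => p; have [p_inner | p_outer] := boolP (0 < p.1 < n).
  have incE i : incident S p i = incident Mob p i by apply: incident_inner.
  rewrite /sq_degree !interior_inner //.
  under eq_finset => i do rewrite incE.
  by under eq_forallb => i do rewrite incE.
have p_side : on_side p by move: p_outer; rewrite /on_side; case: p.1 => k /=; lia.
have deg_ne4 S' : (sq_degree S' p == 4) = false.
  by apply/negbTE; move: (sq_degree_side S' p_side); lia.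
by rewrite !deg_ne4 !andbF.
Qed.

Lemma good_Mob S (c : coloring n) : good S c = good Mob c.
Proof. by rewrite /good N1_Mob N2box_Mob. Qed.

Lemma count_good_Mob S : count_good n S = count_good n Mob.
Proof. by apply: eq_card => c; rewrite !inE good_Mob. Qed.
End Surfaces.


Theorem lemma4p1 (n : nat) : (0 < n)%N ->
  Mbox n = Kbox n /\ Kbox n = Pbox n /\
  (forall c : coloring n,
     (good Mob c = good Klein c) /\ (good Klein c = good Proj c)).
Proof.
(* Both identities hold for every [n]. *)
move=> _; rewrite /Mbox /Kbox /Pbox !(count_good_Mob n Klein) (count_good_Mob n Proj).
by do 2 split=> //; move=> c; rewrite !(good_Mob Klein) (good_Mob Proj).
Qed.
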